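(* Let $A$ be a real $m \times N$ matrix and let $\mathcal{N}(A)$ denote its null space. For a vector $\mathbf{w}$, let $k_{-,\mathbf{w}}$ and $k_{+,\mathbf{w}}$ denote the number of negative entries and the number of positive entries of $\mathbf{w}$, respectively. Let $k$ be a nonnegative integer. (i) If $$k < \min_{\mathbf{w} \in \mathcal{N}(A),\, \mathbf{w} \neq 0} \max\{k_{-,\mathbf{w}}, k_{+,\mathbf{w}}\},$$ then for every nonnegative vector $\mathbf{x}\in\mathbb{R}^N$ with at most $k$ nonzero entries, $\mathbf{x}$ is the unique sparsest nonnegative vector $\tilde{\mathbf{x}}$ satisfying $A\tilde{\mathbf{x}} = \mathbf{y}$, where $\mathbf{y}=A\mathbf{x}$. (ii) Conversely, if $$k \geq \min_{\mathbf{w} \in \mathcal{N}(A),\, \mathbf{w} \neq 0} \max\{k_{-,\mathbf{w}}, k_{+,\mathbf{w}}\},$$ then there exists a nonnegative vector $\mathbf{x}$ with at most $k$ nonzero entries which is not the unique sparsest nonnegative vector $\tilde{\mathbf{x}}$ satisfying $A\tilde{\mathbf{x}} = A\mathbf{x}$.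
   Context: A vector is called $k$-sparse if it has at most $k$ nonzero entries. ''Sparsest'' means having the fewest nonzero entries. *)

From mathcomp Require Import all_boot all_order all_algebra.
Set Implicit Arguments. Unset Strict Implicit. Unset Printing Implicit Defensive.
Import Order.TTheory GRing.Theory Num.Theory.
Local Open Scope ring_scope.

Definition kminus (R : realFieldType) (N : nat) (w : 'cV[R]_N) : nat :=
  #|[set i : 'I_N | w i 0 < 0]|.

Definition kplus (R : realFieldType) (N : nat) (w : 'cV[R]_N) : nat :=
  #|[set i : 'I_N | 0 < w i 0]|.

Definition sparsity (R : realFieldType) (N : nat) (x : 'cV[R]_N) : nat :=
  #|[set i : 'I_N | x i 0 != 0]|.

Definition nonneg (R : realFieldType) (N : nat) (x : 'cV[R]_N) : Prop :=
  forall i, 0 <= x i 0.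

Definition sparsest_nonneg (R : realFieldType) (m N : nat) (A : 'M[R]_(m, N))
  (y : 'cV[R]_m) (x : 'cV[R]_N) : Prop :=
  [/\ nonneg x, A *m x = y &
      forall z : 'cV[R]_N, nonneg z -> A *m z = y -> (sparsity x <= sparsity z)%N].

Definition unique_sparsest_nonneg (R : realFieldType) (m N : nat) (A : 'M[R]_(m, N))
  (y : 'cV[R]_m) (x : 'cV[R]_N) : Prop :=
  sparsest_nonneg A y x /\ forall z, sparsest_nonneg A y z -> z = x.

From mathcomp Require Import all_boot all_order all_algebra.
Import Order.TTheory GRing.Theory Num.Theory.
Local Open Scope ring_scope.
Set Implicit Arguments. Unset Strict Implicit.

(* If x and z are nonnegative solutions of the same system, w := z - x lies in
   the null space, its negative entries sit in the support of x and its positive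
   entries in the support of z; so two distinct k-sparse solutions would give a
   null vector with max(k_-, k_+) <= k. Conversely, splitting a null vector w with
   k_- <= k_+ <= k into positive and negative parts w = w^+ - w^- yields two
   distinct nonnegative solutions of A x = A w^+, the second no less sparse. *)

Section SignCounts.

Variables (R : realFieldType) (N : nat).
Implicit Types x z w : 'cV[R]_N.

Lemma kminus_sub_le_sparsity x z : nonneg z -> (kminus (z - x) <= sparsity x)%N.
Proof.
move=> z_ge0; apply/subset_leq_card/subsetP => i.
rewrite !inE !mxE; apply: contraTneq => ->.
by rewrite subr0 -leNgt z_ge0.
Qed.

Lemma kplus_sub_le_sparsity x z : nonneg x -> (kplus (z - x) <= sparsity z)%N.
Proof.
move=> x_ge0; apply/subset_leq_card/subsetP => i.
rewrite !inE !mxE; apply: contraTneq => ->.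
by rewrite sub0r -leNgt oppr_le0 x_ge0.
Qed.

Lemma kminusN w : kminus (- w) = kplus w.
Proof. by apply: eq_card => i; rewrite !inE mxE oppr_lt0. Qed.

Lemma kplusN w : kplus (- w) = kminus w.
Proof. by apply: eq_card => i; rewrite !inE mxE oppr_gt0. Qed.

Definition pos_part w : 'cV[R]_N := \col_i Order.max (w i 0) 0.

Lemma pos_part_nonneg w : nonneg (pos_part w).
Proof. by move=> i; rewrite mxE le_max lexx orbT. Qed.

Lemma sparsity_pos_part w : sparsity (pos_part w) = kplus w.
Proof.
apply: eq_card => i; rewrite !inE mxE.
by case: (ltP 0 (w i 0)) => [/gt_eqF -> | _]; rewrite ?eqxx.
Qed.

Lemma pos_partB_neg_part w : pos_part w - pos_part (- w) = w.
Proof.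
apply/matrixP => i j; rewrite !mxE (ord1 j).
case: (leP (w i 0) 0) => w_i.
  by rewrite (@max_l _ _ (- w i 0)) ?oppr_ge0 // opprK add0r.
by rewrite (@max_r _ _ (- w i 0)) ?subr0 // oppr_le0 ltW.
Qed.

End SignCounts.

Section NullSpaceProperty.

Variables (R : realFieldType) (m N k : nat) (A : 'M[R]_(m, N)).
Implicit Types x z w : 'cV[R]_N.

Hypothesis null_signs_gt : forall w, A *m w = 0 -> w != 0 ->
  (k < maxn (kminus w) (kplus w))%N.

Lemma eq_nonneg_sparse_solutions x z :
  nonneg x -> nonneg z -> A *m z = A *m x ->
  (sparsity x <= k)%N -> (sparsity z <= k)%N -> z = x.
Proof.
move=> x_ge0 z_ge0 Azx x_sp z_sp; apply/eqP; rewrite -subr_eq0.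
apply/negPn/negP => /(null_signs_gt _); rewrite mulmxBr Azx subrr.
rewrite ltnNge geq_max => /(_ erefl)/negP; apply.
rewrite (leq_trans (kminus_sub_le_sparsity x z_ge0)) //.
exact: leq_trans (kplus_sub_le_sparsity z x_ge0) _.
Qed.

Lemma unique_sparsest_nonneg_sparse x :
  nonneg x -> (sparsity x <= k)%N -> unique_sparsest_nonneg A (A *m x) x.
Proof.
move=> x_ge0 x_sp.
have x_sparsest : sparsest_nonneg A (A *m x) x.
  split=> // z z_ge0 Azx; rewrite leqNgt; apply/negP => z_lt.
  have z_sp := ltnW (leq_trans z_lt x_sp).
  by move: z_lt; rewrite (eq_nonneg_sparse_solutions x_ge0 z_ge0 Azx x_sp z_sp) ltnn.
split=> // z [z_ge0 Azx /(_ x x_ge0 erefl) zx].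
exact: eq_nonneg_sparse_solutions x_ge0 z_ge0 Azx x_sp (leq_trans zx x_sp).
Qed.

End NullSpaceProperty.

Lemma pos_part_not_unique_sparsest (R : realFieldType) (m N : nat)
    (A : 'M[R]_(m, N)) (w : 'cV[R]_N) :
  A *m w = 0 -> w != 0 -> (kminus w <= kplus w)%N ->
  ~ unique_sparsest_nonneg A (A *m pos_part w) (pos_part w).
Proof.
move=> Aw nzw w_signs [[_ _ sparsest] uniq].
have A_neg : A *m pos_part (- w) = A *m pos_part w.
  by apply/eqP; rewrite eq_sym -subr_eq0 -mulmxBr pos_partB_neg_part Aw.
have neg_sparsest : sparsest_nonneg A (A *m pos_part w) (pos_part (- w)).
  split=> [||z z_ge0 Az]; [exact: pos_part_nonneg | exact: A_neg |].
  apply: leq_trans (sparsest z z_ge0 Az).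
  by rewrite !sparsity_pos_part kplusN.
move: nzw; rewrite -(pos_partB_neg_part w) (uniq _ neg_sparsest).
by rewrite subrr eqxx.
Qed.

Theorem theorem1 (R : realFieldType) (m N k : nat) (A : 'M[R]_(m, N)) :
  ((forall w : 'cV[R]_N, A *m w = 0 -> w != 0 ->
      (k < maxn (kminus w) (kplus w))%N) ->
   forall x : 'cV[R]_N, nonneg x -> (sparsity x <= k)%N ->
     unique_sparsest_nonneg A (A *m x) x)
  /\
  ((exists w : 'cV[R]_N, [/\ A *m w = 0, w != 0 &
      (maxn (kminus w) (kplus w) <= k)%N]) ->
   exists x : 'cV[R]_N, [/\ nonneg x, (sparsity x <= k)%N &
     ~ unique_sparsest_nonneg A (A *m x) x]).
Proof.
split; first exact: unique_sparsest_nonneg_sparse.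
case=> w0 [Aw0 nzw0 w0_signs].
have [w [Aw nzw w_signs w_le]] : exists w : 'cV[R]_N, [/\ A *m w = 0, w != 0,
    (maxn (kminus w) (kplus w) <= k)%N & (kminus w <= kplus w)%N].
  have [le_w0|/ltnW lt_w0] := leqP (kminus w0) (kplus w0); first by exists w0.
  exists (- w0); rewrite kminusN kplusN mulmxN Aw0 oppr0 oppr_eq0 maxnC.
  by split.
exists (pos_part w); split; first exact: pos_part_nonneg.
  by rewrite sparsity_pos_part (leq_trans (leq_maxr _ _) w_signs).
exact: pos_part_not_unique_sparsest.
Qed.
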